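(* Let $U$ and $\widetilde{U}$ be as defined in the context, let $a\in\mathbb{N}_1$ and $l\in\mathbb{N}_1$ with $U^l(a)=a$. Then for every $x\in\mathbb{R}_0$ the following are equivalent: (i) the parity sequence $\mathcal{P}_{\widetilde U}(x)=(\lfloor \widetilde U^i(x)\rfloor \bmod 2)_{i\ge 0}$ is eventually periodic with period $\tilde s=(1-(a\bmod 2),\,1-(U(a)\bmod 2),\dots,1-(U^{l-1}(a)\bmod 2))$, i.e. there is $j\in\mathbb{N}_0$ such that $(\lfloor \widetilde U^{i}(x)\rfloor\bmod 2,\dots,\lfloor \widetilde U^{i+l-1}(x)\rfloor\bmod 2)=\tilde s$ for all $i=j+ml$, $m\in\mathbb{N}_0$; (ii) $\mathcal{T}_{\widetilde U}(x)$ tends to $\{U^t(a)\}$ from below, i.e. there is $j_0\in\mathbb{N}_0$ such that for every $j\in\{0,1,\dots,l-1\}$ the sequence $\big(\widetilde U^{kl}(\widetilde U^{j+j_0}(x))\big)_{k\ge 0}$ converges to $U^j(a)$ as $k\to\infty$ and all of its terms are strictly less than $U^j(a)$.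
   Context: $\mathbb{R}_0=\{x\ge0\}$, $\mathbb{R}_1=\{x\ge1\}$, $\mathbb{N}_0=\{0,1,2,\dots\}$, $\mathbb{N}_1=\{1,2,\dots\}$, $\lfloor x\rfloor$ is the floor. $U:\mathbb{R}_1\to\mathbb{R}_1$: $U(x)=x/2$ if $\lfloor x\rfloor$ even, $U(x)=(3x+1)/2$ if $\lfloor x\rfloor$ odd. $\widetilde U:\mathbb{R}_0\to\mathbb{R}_0$: $\widetilde U(x)=(3x+1)/2$ if $\lfloor x\rfloor$ even, $\widetilde U(x)=x/2$ if $\lfloor x\rfloor$ odd. Iterates: $f^0=\mathrm{id}$, $f^i=f\circ f^{i-1}$; $\mathcal{T}_f(x)=(f^i(x))_{i\ge0}$. *)

From Stdlib Require Import Reals ZArith Lra.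
Open Scope R_scope.

(* floor x = Int_part x (Stdlib: Int_part x = up x - 1, the floor). *)
Definition floorZ (x : R) : Z := Int_part x.

Definition Ucol (x : R) : R :=
  if Z.even (floorZ x) then x / 2 else (3 * x + 1) / 2.

Definition Ut (x : R) : R :=
  if Z.even (floorZ x) then (3 * x + 1) / 2 else x / 2.

Definition itR (f : R -> R) (n : nat) (x : R) : R := Nat.iter n f x.

Definition par (y : R) : Z := (floorZ y mod 2)%Z.

(* Along the cycle a, U(a), ..., U^(l-1)(a) of positive integers, U acts at step r as the
   affine map y |-> y/2 or y |-> (3y+1)/2 selected by the parity of U^r(a), and Ũ uses the
   same branch at every real point whose floor has the opposite parity.  Hence while the
   parities of a Ũ-orbit follow the complemented pattern, its distance to the U-cycle is
   multiplied over each period by a fixed factor lam = (product of the slopes), and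
   lam < 1 because lam * a <= U^l(a) = a while lam = c / 2^l with c odd.  The deviation then
   tends to 0 geometrically, and it must be negative: a deviation in [0, 1) would give the
   orbit point the parity of the cycle point itself.  Conversely, an orbit converging to
   the cycle from below eventually lies in [U^r(a) - 1, U^r(a)), whose floors have the
   complemented parity. *)
From Stdlib Require Import Reals ZArith Lra Lia.
Open Scope R_scope.

Lemma itR_add (g : R -> R) (p q : nat) (y : R) : itR g (p + q) y = itR g p (itR g q y).
Proof. unfold itR. apply Nat.iter_add. Qed.

Lemma floorZ_unique (n : Z) (y : R) : IZR n <= y < IZR n + 1 -> floorZ y = n.
Proof. intros H. unfold floorZ. symmetry. apply Int_part_spec. lra. Qed.

Lemma par_IZR (n : Z) : par (IZR n) = (n mod 2)%Z.
Proof. unfold par. rewrite (floorZ_unique n); [reflexivity | lra]. Qed.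

Lemma par_below (n : Z) (y : R) :
  IZR n - 1 <= y < IZR n -> par y = (1 - par (IZR n))%Z.
Proof.
  intros Hy. rewrite par_IZR. unfold par.
  rewrite (floorZ_unique (n - 1)) by (rewrite minus_IZR; lra).
  rewrite !Zmod_even, Z.even_sub. now destruct (Z.even n).
Qed.

Lemma par_above (n : Z) (y : R) :
  IZR n <= y < IZR n + 1 -> par y <> (1 - par (IZR n))%Z.
Proof.
  intros Hy. unfold par at 1. rewrite (floorZ_unique n y Hy), par_IZR.
  pose proof (Z.mod_pos_bound n 2). lia.
Qed.

Definition branch (e : bool) (y : R) : R := if e then y / 2 else (3 * y + 1) / 2.

Definition slope (e : bool) : R := if e then / 2 else 3 / 2.

Lemma branch_sub (e : bool) (y z : R) : branch e y - branch e z = slope e * (y - z).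
Proof. destruct e; unfold branch, slope; lra. Qed.

Lemma slope_le_branch (e : bool) (y : R) : slope e * y <= branch e y.
Proof. destruct e; unfold branch, slope; lra. Qed.

Lemma slope_pos (e : bool) : 0 < slope e.
Proof. destruct e; unfold slope; lra. Qed.

Lemma Ut_branch (n : Z) (y : R) :
  par y = (1 - par (IZR n))%Z -> Ut y = branch (Z.even n) y.
Proof.
  rewrite par_IZR. unfold par, Ut, branch. rewrite !Zmod_even.
  destruct (Z.even (floorZ y)), (Z.even n); easy.
Qed.

Definition Uint (n : Z) : Z := if Z.even n then (n / 2)%Z else ((3 * n + 1) / 2)%Z.

Lemma IZR_Uint (n : Z) : IZR (Uint n) = branch (Z.even n) (IZR n).
Proof.
  unfold Uint, branch. destruct (Z.even n) eqn:He.
  - apply Z.even_spec in He as [k ->].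
    rewrite Z.mul_comm, Z.div_mul, mult_IZR by lia. lra.
  - assert (Ho : Z.odd n = true) by now rewrite <- Z.negb_even, He.
    apply Z.odd_spec in Ho as [k ->].
    replace (3 * (2 * k + 1) + 1)%Z with ((3 * k + 2) * 2)%Z by ring.
    rewrite Z.div_mul by lia. rewrite !plus_IZR, !mult_IZR. lra.
Qed.

Lemma Ucol_IZR (n : Z) : Ucol (IZR n) = IZR (Uint n).
Proof.
  rewrite IZR_Uint. unfold Ucol, branch. now rewrite (floorZ_unique n) by lra.
Qed.

Lemma Uint_ge1 (n : Z) : (1 <= n)%Z -> (1 <= Uint n)%Z.
Proof.
  intros Hn. pose proof (IZR_Uint n) as E. apply IZR_le in Hn.
  assert (H : 1 / 2 <= IZR (Uint n)) by (rewrite E; destruct (Z.even n); unfold branch; lra).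
  destruct (Z_lt_le_dec (Uint n) 1) as [Hlt | ]; [| assumption].
  assert (Hle : (Uint n <= 0)%Z) by lia. apply IZR_le in Hle. lra.
Qed.

Lemma pow_lt_eventually (lam eps : R) :
  0 < lam < 1 -> 0 < eps -> exists N, forall n, (N <= n)%nat -> lam ^ n < eps.
Proof.
  intros Hlam Heps.
  destruct (pow_lt_1_zero lam ltac:(rewrite Rabs_pos_eq; lra) eps Heps) as [N HN].
  exists N. intros n Hn. specialize (HN n Hn).
  now rewrite Rabs_pos_eq in HN by (apply pow_le; lra).
Qed.

Lemma Un_cv_geometric (c b lam : R) :
  0 < lam < 1 -> Un_cv (fun k => c + b * lam ^ k) c.
Proof.
  intros Hlam eps Heps.
  destruct (pow_lt_eventually lam (eps / (Rabs b + 1)) Hlam) as [N HN].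
  { apply Rdiv_lt_0_compat; [lra | pose proof (Rabs_pos b); lra]. }
  exists N. intros n Hn. specialize (HN n Hn). unfold R_dist.
  replace (c + b * lam ^ n - c) with (b * lam ^ n) by ring.
  pose proof (pow_lt lam n ltac:(lra)).
  rewrite Rabs_mult, (Rabs_pos_eq (lam ^ n)) by lra.
  pose proof (Rabs_pos b).
  apply Rmult_lt_compat_l with (r := Rabs b + 1) in HN; [| lra].
  replace ((Rabs b + 1) * (eps / (Rabs b + 1))) with eps in HN by (field; lra).
  nra.
Qed.

Lemma deviation_neg (n : Z) (lam d : R) :
  0 < lam < 1 ->
  (forall m, par (IZR n + lam ^ m * d) = (1 - par (IZR n))%Z) -> d < 0.
Proof.
  intros Hlam Hpar.
  destruct (Rlt_or_le d 0) as [| [Hd | <-]]; [assumption | exfalso | exfalso].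
  - (* some lam^m d lands in (0, 1), where the floor is n itself *)
    destruct (pow_lt_eventually lam (/ d) Hlam) as [N HN]; [now apply Rinv_0_lt_compat |].
    specialize (HN N (le_n N)). pose proof (pow_lt lam N ltac:(lra)).
    apply Rmult_lt_compat_r with (r := d) in HN; [| lra].
    rewrite Rinv_l in HN by lra.
    apply (par_above n (IZR n + lam ^ N * d)); [nra | apply Hpar].
  - apply (par_above n (IZR n + lam ^ 0 * 0)); [lra | apply Hpar].
Qed.

Lemma Un_cv_family_near (n : nat) (u : nat -> nat -> R) (c : nat -> R) (eps : R) :
  0 < eps -> (forall r, (r < n)%nat -> Un_cv (u r) (c r)) ->
  exists K, forall r k, (r < n)%nat -> (K <= k)%nat -> R_dist (u r k) (c r) < eps.
Proof.
  intros Heps. induction n as [| n IH]; intros Hcv.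
  - exists 0%nat. intros r k Hr. lia.
  - destruct IH as [K1 HK1]; [intros r Hr; apply Hcv; lia |].
    destruct (Hcv n (Nat.lt_succ_diag_r n) eps Heps) as [K2 HK2].
    exists (Nat.max K1 K2). intros r k Hr Hk.
    destruct (Nat.eq_dec r n) as [-> | Hne]; [apply HK2 | apply HK1]; lia.
Qed.

Lemma converges_from_below_par (l : nat) (z : nat -> nat -> R) (c : nat -> Z) :
  (forall r, (r < l)%nat -> Un_cv (z r) (IZR (c r)) /\ forall k, z r k < IZR (c r)) ->
  exists K, forall r k, (r < l)%nat -> (K <= k)%nat ->
    par (z r k) = (1 - par (IZR (c r)))%Z.
Proof.
  intros Hz.
  destruct (Un_cv_family_near l z (fun r => IZR (c r)) 1 Rlt_0_1) as [K HK].
  { intros r Hr. apply Hz, Hr. }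
  exists K. intros r k Hr Hk. apply par_below.
  specialize (HK r k Hr Hk). unfold R_dist in HK. apply Rabs_def2 in HK.
  pose proof (proj2 (Hz r Hr) k). lra.
Qed.

Section Cycle.

Variable a : nat.
Hypothesis ha : (1 <= a)%nat.

Definition orbit (r : nat) : Z := Nat.iter r Uint (Z.of_nat a).

Lemma orbit_ge1 (r : nat) : (1 <= orbit r)%Z.
Proof. induction r as [| r IH]; [simpl; lia | now apply Uint_ge1]. Qed.

Lemma itR_Ucol_orbit (r : nat) : itR Ucol r (INR a) = IZR (orbit r).
Proof.
  induction r as [| r IH]; [apply INR_IZR_INZ |].
  change (Ucol (itR Ucol r (INR a)) = IZR (Uint (orbit r))).
  now rewrite IH, Ucol_IZR.
Qed.

Fixpoint slope_prod (r : nat) : R :=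
  match r with O => 1 | S r' => slope (Z.even (orbit r')) * slope_prod r' end.

Lemma slope_prod_pos (r : nat) : 0 < slope_prod r.
Proof.
  induction r as [| r IH]; simpl; [lra |].
  apply Rmult_lt_0_compat; [apply slope_pos | exact IH].
Qed.

Lemma slope_prod_le_orbit (r : nat) : slope_prod r * IZR (orbit 0) <= IZR (orbit r).
Proof.
  induction r as [| r IH]; simpl slope_prod; [simpl; lra |].
  change (orbit (S r)) with (Uint (orbit r)). rewrite IZR_Uint.
  pose proof (slope_le_branch (Z.even (orbit r)) (IZR (orbit r))).
  pose proof (slope_pos (Z.even (orbit r))). nra.
Qed.

Fixpoint slope_num (r : nat) : Z :=
  match r with
  | O => 1%Z
  | S r' => if Z.even (orbit r') then slope_num r' else (3 * slope_num r')%Z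
  end.

Lemma slope_prod_pow2 (r : nat) : slope_prod r * 2 ^ r = IZR (slope_num r).
Proof.
  induction r as [| r IH]; cbn [slope_prod slope_num pow]; [lra |].
  destruct (Z.even (orbit r)); unfold slope; rewrite ?mult_IZR, <- IH; field.
Qed.

Lemma slope_num_odd (r : nat) : Z.odd (slope_num r) = true.
Proof.
  induction r as [| r IH]; [reflexivity | cbn [slope_num]].
  destruct (Z.even (orbit r)); [exact IH | now rewrite Z.odd_mul, IH].
Qed.

Lemma slope_prod_neq1 (r : nat) : (0 < r)%nat -> slope_prod r <> 1.
Proof.
  intros Hr Heq. pose proof (slope_prod_pow2 r) as H2. rewrite Heq, Rmult_1_l in H2.
  destruct r as [| r]; [lia |].
  rewrite pow_IZR, Nat2Z.inj_succ, Z.pow_succ_r in H2 by lia.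
  apply eq_IZR in H2. pose proof (slope_num_odd (S r)) as Hodd.
  rewrite <- H2, Z.odd_mul in Hodd. discriminate.
Qed.

Lemma Ut_shadow (n : nat) (y : R) :
  (forall r, (r < n)%nat -> par (itR Ut r y) = (1 - par (IZR (orbit r)))%Z) ->
  itR Ut n y - IZR (orbit n) = slope_prod n * (y - IZR (orbit 0)).
Proof.
  induction n as [| n IH]; intros Hpar; simpl slope_prod; [simpl; lra |].
  change (Ut (itR Ut n y) - IZR (Uint (orbit n)) =
          slope (Z.even (orbit n)) * slope_prod n * (y - IZR (orbit 0))).
  rewrite (Ut_branch (orbit n)) by (apply Hpar; lia).
  rewrite IZR_Uint, branch_sub, IH by (intros r Hr; apply Hpar; lia). ring.
Qed.

Variable l : nat.
Hypothesis hl : (1 <= l)%nat.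
Hypothesis hper : itR Ucol l (INR a) = INR a.

Lemma orbit_period : orbit l = orbit 0.
Proof. apply eq_IZR. rewrite <- itR_Ucol_orbit, hper. apply INR_IZR_INZ. Qed.

Lemma slope_prod_lt1 : slope_prod l < 1.
Proof.
  pose proof (slope_prod_le_orbit l) as H. rewrite orbit_period in H.
  pose proof (IZR_le _ _ (orbit_ge1 0)). pose proof (slope_prod_neq1 l hl). nra.
Qed.

Lemma Ut_shadow_periods (y : R) :
  (forall m r, (r < l)%nat -> par (itR Ut (m * l + r) y) = (1 - par (IZR (orbit r)))%Z) ->
  forall m, itR Ut (m * l) y - IZR (orbit 0) = slope_prod l ^ m * (y - IZR (orbit 0)).
Proof.
  intros Hpar m. induction m as [| m IH]; [simpl; lra |].
  replace (S m * l)%nat with (l + m * l)%nat by lia.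
  rewrite itR_add, <- orbit_period at 1.
  rewrite Ut_shadow, IH; [simpl; ring |].
  intros r Hr. rewrite <- itR_add, Nat.add_comm. now apply Hpar.
Qed.

Lemma par_pattern_converges_from_below (y : R) :
  (forall m r, (r < l)%nat -> par (itR Ut (m * l + r) y) = (1 - par (IZR (orbit r)))%Z) ->
  forall j, (j < l)%nat ->
    Un_cv (fun k => itR Ut (k * l) (itR Ut j y)) (IZR (orbit j)) /\
    forall k, itR Ut (k * l) (itR Ut j y) < IZR (orbit j).
Proof.
  intros Hpar j Hj.
  set (lam := slope_prod l). set (d := y - IZR (orbit 0)).
  assert (Hlam : 0 < lam < 1) by (split; [apply slope_prod_pos | apply slope_prod_lt1]).
  assert (Hdev : forall m, itR Ut (m * l) y = IZR (orbit 0) + lam ^ m * d).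
  { intros m. unfold lam, d. rewrite <- Ut_shadow_periods by exact Hpar. ring. }
  assert (Hd : d < 0).
  { apply (deviation_neg (orbit 0) lam d Hlam). intros m.
    rewrite <- Hdev, <- (Nat.add_0_r (m * l)). now apply Hpar. }
  assert (Hk : forall k, itR Ut (k * l) (itR Ut j y) =
                         IZR (orbit j) + slope_prod j * d * lam ^ k).
  { intros k. rewrite <- itR_add, Nat.add_comm, itR_add.
    rewrite <- (Rplus_minus (IZR (orbit j)) (itR Ut j _)), Ut_shadow, Hdev; [ring |].
    intros r Hr. rewrite <- itR_add, Nat.add_comm. apply Hpar. lia. }
  split.
  - apply (Un_cv_ext (fun k => IZR (orbit j) + slope_prod j * d * lam ^ k)).
    + intros k. symmetry. apply Hk.
    + now apply Un_cv_geometric.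
  - intros k. rewrite Hk. pose proof (slope_prod_pos j). pose proof (pow_lt lam k ltac:(lra)).
    assert (0 < slope_prod j * lam ^ k) by now apply Rmult_lt_0_compat. nra.
Qed.

End Cycle.

Theorem proposition2 (a l : nat) (ha : (1 <= a)%nat) (hl : (1 <= l)%nat)
  (hper : itR Ucol l (INR a) = INR a) (x : R) (hx : 0 <= x) :
  (exists j : nat, forall m r : nat, (r < l)%nat ->
      par (itR Ut (j + m * l + r) x) = (1 - par (itR Ucol r (INR a)))%Z)
  <->
  (exists j0 : nat, forall j : nat, (j < l)%nat ->
      Un_cv (fun k => itR Ut (k * l) (itR Ut (j + j0) x)) (itR Ucol j (INR a)) /\
      (forall k : nat, itR Ut (k * l) (itR Ut (j + j0) x) < itR Ucol j (INR a))).
Proof.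
  split.
  - intros [j Hpar]. exists j. intros jj Hjj.
    rewrite itR_Ucol_orbit, itR_add.
    apply (par_pattern_converges_from_below a ha l hl hper); [| exact Hjj].
    intros m r Hr. rewrite <- itR_add, <- itR_Ucol_orbit.
    replace (m * l + r + j)%nat with (j + m * l + r)%nat by lia. now apply Hpar.
  - intros [j0 Hcv].
    destruct (converges_from_below_par l
                (fun r k => itR Ut (k * l) (itR Ut (r + j0) x)) (orbit a)) as [K HK].
    { intros r Hr. rewrite <- itR_Ucol_orbit. now apply Hcv. }
    exists (j0 + K * l)%nat. intros m r Hr.
    rewrite itR_Ucol_orbit.
    replace (j0 + K * l + m * l + r)%nat with ((K + m) * l + (r + j0))%nat by lia.
    rewrite itR_add. apply HK; lia.
Qed.
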